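(* Let $G=\langle(135)(246),(14)(23)(56)\rangle\le S_6$ (dihedral of order $6$), $G'=\langle G,(12)(34)(56)\rangle$ (of order $12$, with $|G':G|=2$), and $D=\{(6),(5,1),(4,2),(4,1^2),(3^2)\}$. Then: (i) $Aut_0(T_{D;G})\cong S_3\times S_2$; (ii) $Aut_0^{G'}(T_{D;G})\cong S_2\times S_2$.
   Context: For a partition $\lambda=(\lambda_1\ge\dots\ge\lambda_k>0)$ of $6$, a tabloid of shape $\lambda$ is a sequence $A=(A_1,\dots,A_k)$ of pairwise disjoint subsets of $\{1,\dots,6\}$ with $|A_i|=\lambda_i$; $T_\lambda$ is their set. $S_6$ acts by $\zeta A=(\zeta(A_1),\dots,\zeta(A_k))$. Tabloids are partially ordered by $A\le B$ iff $A_1\cup\dots\cup A_i\subseteq B_1\cup\dots\cup B_i$ for all $i\ge1$ (missing rows empty). $T_{\lambda;G}$ is the set of $G$-orbits $O_G(A)$ in $T_\lambda$ and $T_{D;G}=\bigcup_{\mu\in D}T_{\mu;G}$, ordered by $a\le b$ iff there are $A\in a$, $B\in b$ with $A\le B$. $Aut_0(T_{D;G})$ is the group of bijections $\alpha$ of $T_{D;G}$ with $\alpha(a)\le\alpha(b)\iff a\le b$ and $\alpha(T_{\mu;G})=T_{\mu;G}$ for every $\mu\in D$. The group $G'/G$ acts on $T_{D;G}$ by $(\eta G)O_G(A)=O_G(\eta A)$, and $Aut_0^{G'}(T_{D;G})$ is the subgroup of $\alpha\in Aut_0(T_{D;G})$ with $\alpha(\iota a)=\iota\alpha(a)$ for all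 $\iota\in G'/G$ and $a\in T_{D;G}$ (equivalently, automorphisms mapping each pair of distinct $G$-orbits contained in one $G'$-orbit onto such a pair). *)

From mathcomp Require Import all_boot all_order all_fingroup.
Set Implicit Arguments. Unset Strict Implicit. Unset Printing Implicit Defensive.


(* Points 1..6 are represented by 'I_6 (point k is the ordinal k-1). *)

Definition pt (k : nat) : 'I_6 := inord k.-1.

(* In MathComp, (s * t) x = t (s x), so tperm a b * tperm a c is the
   3-cycle (a b c). *)
(* (135)(246) *)
Definition g1 : {perm 'I_6} :=
  (tperm (pt 1) (pt 3) * tperm (pt 1) (pt 5) *
   (tperm (pt 2) (pt 4) * tperm (pt 2) (pt 6)))%g.
Definition g2 : {perm 'I_6} :=
  (tperm (pt 1) (pt 4) * tperm (pt 2) (pt 3) * tperm (pt 5) (pt 6))%g.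
Definition g3 : {perm 'I_6} :=
  (tperm (pt 1) (pt 2) * tperm (pt 3) (pt 4) * tperm (pt 5) (pt 6))%g.

Definition Gd : {group {perm 'I_6}} := (<<[set g1; g2]>>)%G.
Definition Gd' : {group {perm 'I_6}} := (<<[set g1; g2; g3]>>)%G.

(* Tabloids: rows A_1, A_2, ... indexed by 'I_6 (row i+1 is index i);
   rows beyond the number of parts of the shape are empty ("missing rows
   empty"). A partition of 6 has at most 6 parts, so 6 rows suffice. *)
Definition tab := {ffun 'I_6 -> {set 'I_6}}.

Definition is_tabloid (lam : seq nat) (A : tab) : bool :=
  [forall i : 'I_6, #|A i| == nth 0 lam i] &&
  [forall i : 'I_6, forall j : 'I_6, (i != j) ==> [disjoint A i & A j]].

Definition T_lam (lam : seq nat) : {set tab} := [set A | is_tabloid lam A].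

Definition tact (z : {perm 'I_6}) (A : tab) : tab := [ffun i => z @: A i].

Definition tab_le (A B : tab) : bool :=
  [forall i : 'I_6,
     (\bigcup_(j : 'I_6 | j <= i) A j) \subset (\bigcup_(j : 'I_6 | j <= i) B j)].

Definition orbG (G : {set {perm 'I_6}}) (A : tab) : {set tab} :=
  [set tact z A | z in G].

Definition T_lamG (lam : seq nat) (G : {set {perm 'I_6}}) : {set {set tab}} :=
  [set orbG G A | A in T_lam lam].

Definition T_DG (D : seq (seq nat)) (G : {set {perm 'I_6}}) : {set {set tab}} :=
  \bigcup_(lam <- D) T_lamG lam G.

Definition orb_le (a b : {set tab}) : bool :=
  [exists A in a, exists B in b, tab_le A B].

(* Aut_0(T_{D;G}): bijections of T_{D;G} (= permutations of the type of
   sets of tabloids supported on T_{D;G}) that preserve and reflect the order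
   and fix each T_{mu;G} (mu in D) setwise. *)
Definition Aut0 (D : seq (seq nat)) (G : {set {perm 'I_6}}) :
    {set {perm {set tab}}} :=
  [set al : {perm {set tab}} |
     [&& perm_on (T_DG D G) al,
         [forall a in T_DG D G, forall b in T_DG D G,
             orb_le (al a) (al b) == orb_le a b] &
         all (fun mu => al @: T_lamG mu G == T_lamG mu G) D]].

(* Aut_0^{G'}(T_{D;G}): those commuting with the action of G'/G given by
   (eta G) O_G(A) = O_G(eta A). *)
Definition Aut0G (D : seq (seq nat)) (G G' : {set {perm 'I_6}}) :
    {set {perm {set tab}}} :=
  [set al in Aut0 D G |
     [forall eta in G', forall a in T_DG D G, forall A in a, forall B in al a,
        al (orbG G (tact eta A)) == orbG G (tact eta B)]].

Definition D6 : seq (seq nat) :=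
  [:: [:: 6]; [:: 5; 1]; [:: 4; 2]; [:: 4; 1; 1]; [:: 3; 3]].

(* The tabloids with shapes in D fall into 15 G-orbits: one each of shapes (6) and
   (5,1), four of shape (4,2), five of shape (4,1^2) and four of shape (3^2).
   Encoding a tabloid by the row of each point turns orbits, their order and the
   action of G' into finite computations on lists.  A shape-preserving order
   automorphism must fix the (4,2)-orbit lying above two (4,1^2)-orbits; it may
   permute the other three (4,2)-orbits arbitrarily, which determines it on the
   (4,1^2)- and (3^2)-orbits below them, and independently swap the two
   (4,1^2)-orbits below the fixed one.  An exhaustive search over the shape
   classes confirms that there is nothing else, whence S_3 x S_2.  The element
   (12)(34)(56) of G' \ G swaps two of the three permuted (4,2)-orbits and the two
   (4,1^2)-orbits below the fixed one, so commuting with it cuts S_3 down to S_2. *)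

From mathcomp Require Import all_boot all_order all_fingroup.
Set Implicit Arguments. Unset Strict Implicit. Unset Printing Implicit Defensive.

(* [comp_seq s t] lists [t (s x)]: it matches the product [s * t] of permutations. *)
Definition comp_seq (s t : seq nat) : seq nat := [seq nth 0 t x | x <- s].

Section IotaPerm.
Variables (n : nat) (l : seq nat).
Hypothesis pl : perm_eq l (iota 0 n).

Lemma size_iota_perm : size l = n.
Proof. by rewrite (perm_size pl) size_iota. Qed.

Lemma nth_iota_perm_lt k : k < n -> nth 0 l k < n.
Proof.
move=> lt_kn; have: nth 0 l k \in iota 0 n by rewrite -(perm_mem pl) mem_nth ?size_iota_perm.
by rewrite mem_iota.
Qed.

Lemma nth_iota_perm_inj i j : i < n -> j < n -> nth 0 l i = nth 0 l j -> i = j.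
Proof.
move=> lt_in lt_jn /eqP.
by rewrite nth_uniq ?size_iota_perm ?(perm_uniq pl) ?iota_uniq // => /eqP.
Qed.

End IotaPerm.

Lemma comp_iota_perm n s t :
  perm_eq s (iota 0 n) -> perm_eq t (iota 0 n) -> perm_eq (comp_seq s t) (iota 0 n).
Proof.
move=> ps pt; apply: uniq_perm; rewrite ?iota_uniq //.
- rewrite map_inj_in_uniq ?(perm_uniq ps) ?iota_uniq // => i j.
  by rewrite !(perm_mem ps) !mem_iota /=; apply: nth_iota_perm_inj.
move=> k; rewrite mem_iota /=; apply/mapP/idP => [[i] |].
  by rewrite (perm_mem ps) mem_iota /= => /(nth_iota_perm_lt pt) lt_in ->.
move=> lt_kn.
have kt : k \in t by rewrite (perm_mem pt) mem_iota.
exists (index k t); last by rewrite nth_index.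
by rewrite (perm_mem ps) mem_iota /= -(size_iota_perm pt) index_mem.
Qed.

Section PermSeq.
Variable n : nat.
Implicit Types (s t : {perm 'I_n}) (l : seq nat).

Definition perm_seq s : seq nat := [seq val (s i) | i <- enum 'I_n].

Lemma size_perm_seq s : size (perm_seq s) = n.
Proof. by rewrite size_map size_enum_ord. Qed.

Lemma nth_perm_seq s (i : 'I_n) : nth 0 (perm_seq s) i = s i.
Proof. by rewrite (nth_map i) ?size_enum_ord // nth_ord_enum. Qed.

Lemma perm_seq_inj : injective perm_seq.
Proof. by move=> s t E; apply/permP => i; apply: ord_inj; rewrite -!nth_perm_seq E. Qed.

Lemma perm_seq1 : perm_seq 1 = iota 0 n.
Proof. by rewrite -val_enum_ord; apply: eq_map => i; rewrite perm1. Qed.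

Lemma perm_seqM s t : perm_seq (s * t) = comp_seq (perm_seq s) (perm_seq t).
Proof. by rewrite /comp_seq -map_comp; apply: eq_map => i /=; rewrite nth_perm_seq permM. Qed.

Lemma perm_seq_tperm (i j : 'I_n) :
  perm_seq (tperm i j) =
    [seq if k == i then (j : nat) else if k == j then (i : nat) else k | k : nat <- iota 0 n].
Proof.
rewrite -val_enum_ord -map_comp; apply: eq_map => k /=.
rewrite !(inj_eq val_inj).
by case: tpermP => [->|->|/eqP/negbTE-> /eqP/negbTE->] //; rewrite eqxx //; case: eqP => // ->.
Qed.

Lemma perm_seq_iota s : perm_eq (perm_seq s) (iota 0 n).
Proof.
rewrite -val_enum_ord [perm_seq s](map_comp val s); apply: perm_map.
apply: uniq_perm; rewrite ?enum_uniq ?(map_inj_uniq (@perm_inj _ s)) ?enum_uniq // => i.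
by rewrite mem_enum; apply/mapP; exists (s^-1 i)%g; rewrite ?mem_enum ?permKV.
Qed.

Lemma perm_seq_surj l : perm_eq l (iota 0 n) -> exists s, perm_seq s = l.
Proof.
move=> pl; have inj : injective (fun i : 'I_n => Ordinal (nth_iota_perm_lt pl (ltn_ord i))).
  by move=> i j [] /(nth_iota_perm_inj pl (ltn_ord i) (ltn_ord j)) /val_inj.
exists (perm inj); apply: (@eq_from_nth _ 0); rewrite size_perm_seq ?(size_iota_perm pl) //.
by move=> i lt_in; rewrite -[i]/(val (Ordinal lt_in)) nth_perm_seq permE.
Qed.

End PermSeq.

Lemma perm_seq0 n (s : {perm 'I_n.+1}) : nth 0 (perm_seq s) 0 = s ord0.
Proof. exact: (nth_perm_seq s ord0). Qed.

Lemma lift_perm_stab n (s : {perm 'I_n.+1}) : s ord0 = ord0 -> exists u, s = lift_perm ord0 ord0 u.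
Proof.
move=> s0; pose f (k : 'I_n) := odflt k (unlift ord0 (s (lift ord0 k))).
have fE k : lift ord0 (f k) = s (lift ord0 k).
  rewrite /f; case: unliftP => [j -> // | /=].
  by rewrite -{2}s0 => /perm_inj /eqP; rewrite eq_sym (negPf (neq_lift _ _)).
have f_inj : injective f by move=> i j /(congr1 (lift ord0)); rewrite !fE => /perm_inj /lift_inj.
exists (perm f_inj); apply/permP => x; case: (unliftP ord0 x) => [k -> | ->].
  by rewrite lift_perm_lift permE fE.
by rewrite lift_perm_id.
Qed.

Fixpoint all_words (a m : nat) (P : seq nat -> bool) : bool :=
  if m is m'.+1 then all (fun x => all_words a m' (fun w => P (x :: w))) (iota 0 a)
  else P [::].

Lemma all_wordsP a m P : all_words a m P -> forall w, size w = m -> all (gtn a) w -> P w.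
Proof.
elim: m P => [|m IH] P /= P_words [|x w] //= [sz_w] /andP[lt_xa lt_w].
by apply: (IH (fun w => P (x :: w))) => //; move/allP: P_words; apply; rewrite mem_iota.
Qed.

(* Depth-first enumeration of the injective sequences [p] with [p_k \in cand k]
   whose entries are pairwise compatible, [compat i a j b] meaning that
   [i |-> a] and [j |-> b] may occur together. *)
Section AdmissibleSeqs.
Variables (cand : nat -> seq nat) (compat : nat -> nat -> nat -> nat -> bool).

Definition extends (s : seq nat) (v : nat) :=
  (v \notin s) && all (fun i => compat i (nth 0 s i) (size s) v) (iota 0 (size s)).

Fixpoint admissible_seqs (m : nat) : seq (seq nat) :=
  if m is m'.+1 then
    flatten [seq [seq rcons s v | v <- cand m' & extends s v] | s <- admissible_seqs m']
  else [:: [::]].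

Lemma mem_admissible_seqs p :
    (forall k, k < size p -> nth 0 p k \in cand k) -> uniq p ->
    (forall i j, i < j < size p -> compat i (nth 0 p i) j (nth 0 p j)) ->
  p \in admissible_seqs (size p).
Proof.
elim/last_ind: p => [//|p v IH]; rewrite size_rcons rcons_uniq => p_cand /andP[v_p uniq_p] p_compat.
have nth_p k : k < size p -> nth 0 (rcons p v) k = nth 0 p k by rewrite nth_rcons => ->.
have nth_v : nth 0 (rcons p v) (size p) = v by rewrite nth_rcons ltnn eqxx.
apply/flatten_mapP; exists p.
  apply: IH => // [k lt_kp | i j /andP[lt_ij lt_jp]].
    by rewrite -nth_p // p_cand // ltnW.
  by rewrite -!nth_p ?(ltn_trans lt_ij) // p_compat // lt_ij ltnW.
have v_cand : v \in cand (size p) by rewrite -{1}nth_v p_cand.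
apply/mapP; exists v => //; rewrite mem_filter v_cand andbT /extends v_p /=.
apply/allP => i; rewrite mem_iota add0n /= => lt_ip.
by rewrite -nth_p // -{2}nth_v; apply: p_compat; rewrite lt_ip /=.
Qed.

End AdmissibleSeqs.

Section Relabel.
Variables (T : finType) (n : nat) (o : nat -> T).
Hypothesis o_inj : forall i j, i < n -> j < n -> o i = o j -> i = j.

Definition labelled : {set T} := [set x | has (fun k => x == o k) (iota 0 n)].

Definition label (x : T) : nat := find (fun k => x == o k) (iota 0 n).

Lemma labelledP x : reflect (exists2 k, k < n & x = o k) (x \in labelled).
Proof.
rewrite inE; apply: (iffP hasP) => [[k] | [k lt_kn ->]].
  by rewrite mem_iota => /= lt_kn /eqP ->; exists k.
by exists k; rewrite ?mem_iota.
Qed.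

Lemma labelled_o k : k < n -> o k \in labelled.
Proof. by move=> lt_kn; apply/labelledP; exists k. Qed.

Lemma label_o k : k < n -> label (o k) = k.
Proof.
move=> lt_kn; have has_k : has (fun j => o k == o j) (iota 0 n).
  by apply/hasP; exists k; rewrite ?mem_iota.
have lt_label : label (o k) < n by rewrite -[n](size_iota 0) -has_find.
have /eqP := nth_find 0 has_k; rewrite nth_iota // add0n.
by move/(o_inj lt_kn lt_label)/esym.
Qed.

Lemma labelK x : x \in labelled -> label x < n /\ o (label x) = x.
Proof. by case/labelledP=> k lt_kn ->; rewrite label_o. Qed.

Definition relabel_fun (l : seq nat) (x : T) : T :=
  if perm_eq l (iota 0 n) && (x \in labelled) then o (nth 0 l (label x)) else x.

Lemma relabel_fun_inj l : injective (relabel_fun l).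
Proof.
rewrite /relabel_fun; case: (boolP (perm_eq l _)) => /= pl x y; last exact.
have lt_l z : z \in labelled -> nth 0 l (label z) < n.
  by move/labelK=> [lt_z _]; apply: nth_iota_perm_lt.
case: (boolP (x \in labelled)) => Lx; case: (boolP (y \in labelled)) => Ly //.
- move/o_inj=> /(_ (lt_l _ Lx) (lt_l _ Ly)) /nth_iota_perm_inj.
  move=> /(_ _ pl (proj1 (labelK Lx)) (proj1 (labelK Ly))) /(congr1 o).
  by rewrite (proj2 (labelK Lx)) (proj2 (labelK Ly)).
- by move=> E; move: Ly; rewrite -E labelled_o ?lt_l.
- by move=> E; move: Lx; rewrite E labelled_o ?lt_l.
Qed.

Definition relabel (l : seq nat) : {perm T} := perm (@relabel_fun_inj l).

Lemma relabel_o l k : perm_eq l (iota 0 n) -> k < n -> relabel l (o k) = o (nth 0 l k).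
Proof. by move=> pl lt_kn; rewrite permE /relabel_fun pl labelled_o // label_o. Qed.

Lemma relabel_on l : perm_on labelled (relabel l).
Proof.
apply/subsetP => x; rewrite inE; apply: contraR => Lx.
by rewrite permE /relabel_fun (negPf Lx) andbF.
Qed.

Lemma relabelM l1 l2 : perm_eq l1 (iota 0 n) -> perm_eq l2 (iota 0 n) ->
  relabel (comp_seq l1 l2) = (relabel l1 * relabel l2)%g.
Proof.
move=> p1 p2; have p12 := comp_iota_perm p1 p2.
apply/permP => x; rewrite permM.
case: (boolP (x \in labelled)) => Lx; last by rewrite !(out_perm (relabel_on _) Lx).
have [lt_x <-] := labelK Lx.
rewrite !relabel_o ?nth_iota_perm_lt //.
by rewrite /comp_seq (nth_map 0) ?(size_iota_perm p1).
Qed.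

Lemma relabel_inj l1 l2 : perm_eq l1 (iota 0 n) -> perm_eq l2 (iota 0 n) ->
  relabel l1 = relabel l2 -> l1 = l2.
Proof.
move=> p1 p2 E; apply: (@eq_from_nth _ 0); rewrite ?(size_iota_perm p1) ?(size_iota_perm p2) //.
move=> k lt_kn; apply: o_inj; rewrite ?nth_iota_perm_lt //.
by rewrite -!relabel_o // E.
Qed.

Definition labels_of (al : {perm T}) : seq nat := [seq label (al (o k)) | k <- iota 0 n].

Section LabelsOf.
Variables (al : {perm T}) (al_on : perm_on labelled al).

Lemma labels_ofE k : k < n -> label (al (o k)) < n /\ al (o k) = o (label (al (o k))).
Proof.
move=> lt_kn; have Lal : al (o k) \in labelled by rewrite perm_closed ?labelled_o.
by have [-> ->] := labelK Lal.
Qed.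

Lemma labels_of_iota : perm_eq (labels_of al) (iota 0 n).
Proof.
have sub : {subset labels_of al <= iota 0 n}.
  by move=> x /mapP[k]; rewrite !mem_iota /= => /labels_ofE[lt_x _] ->.
have uniq_l : uniq (labels_of al).
  rewrite map_inj_in_uniq ?iota_uniq // => i j; rewrite !mem_iota /= => lt_in lt_jn E.
  apply: o_inj => //; apply: (@perm_inj _ al).
  by rewrite (proj2 (labels_ofE lt_in)) (proj2 (labels_ofE lt_jn)) E.
apply: uniq_perm; rewrite ?iota_uniq //.
by case: (uniq_min_size uniq_l sub); rewrite ?size_map ?size_iota.
Qed.

Lemma labels_ofK : relabel (labels_of al) = al.
Proof.
apply/permP => x; case: (boolP (x \in labelled)) => Lx; last first.
  by rewrite !(out_perm _ Lx) // relabel_on // labels_of_iota.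
have [lt_x <-] := labelK Lx.
by rewrite relabel_o ?labels_of_iota // (nth_map 0) ?size_iota // nth_iota //
           -(proj2 (labels_ofE _)).
Qed.

End LabelsOf.

End Relabel.

(* A row word [r] of length 6 encodes the tabloid whose point [x] lies in row [nth 0 r x]. *)
Definition tab_of_rows (r : seq nat) : tab := [ffun i : 'I_6 => [set x : 'I_6 | nth 0 r x == i]].

Definition row_word (r : seq nat) : bool := (size r == 6) && all (gtn 6) r.

Definition le_word (r s : seq nat) : bool := all (fun x => nth 0 s x <= nth 0 r x) (iota 0 6).

Definition act_word (t r : seq nat) : seq nat := [seq nth 0 r (index y t) | y <- iota 0 6].

Lemma forall_ord_iota n (P : nat -> bool) : [forall i : 'I_n, P i] = all P (iota 0 n).
Proof.
apply/forallP/allP => [P_ i | P_ i]; last by apply: P_; rewrite mem_iota /=.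
by rewrite mem_iota => /= lt_in; apply: (P_ (Ordinal lt_in)).
Qed.

Lemma nth_row_word_lt r (x : 'I_6) : row_word r -> nth 0 r x < 6.
Proof. by case/andP=> /eqP sz_r /allP lt_r; apply: lt_r; rewrite mem_nth ?sz_r. Qed.

Lemma tab_of_rows_inj r s : row_word r -> row_word s -> tab_of_rows r = tab_of_rows s -> r = s.
Proof.
move=> wr ws E; have [/eqP sz_r _] := andP wr; have [/eqP sz_s _] := andP ws.
apply: (@eq_from_nth _ 0); rewrite ?sz_r ?sz_s // => k lt_k6.
pose x : 'I_6 := Ordinal lt_k6.
have := congr1 (fun A : tab => x \in A (Ordinal (nth_row_word_lt x wr))) E.
by rewrite /= !ffunE !inE /= eqxx => /esym/eqP.
Qed.

Lemma bigcup_tab_of_rows r (i : 'I_6) : row_word r ->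
  \bigcup_(j : 'I_6 | j <= i) tab_of_rows r j = [set x : 'I_6 | nth 0 r x <= i].
Proof.
move=> wr; apply/setP => x; rewrite inE.
apply/bigcupP/idP => [[j le_ji] | le_xi]; first by rewrite ffunE inE => /eqP ->.
by exists (Ordinal (nth_row_word_lt x wr)); rewrite // ffunE inE.
Qed.

Lemma tab_le_rows r s : row_word r -> row_word s ->
  tab_le (tab_of_rows r) (tab_of_rows s) = le_word r s.
Proof.
move=> wr ws; rewrite /tab_le /le_word -forall_ord_iota.
apply/forallP/forallP => [le_rs x | le_rs i].
  have := le_rs (Ordinal (nth_row_word_lt x wr)).
  by rewrite !bigcup_tab_of_rows // => /subsetP/(_ x); rewrite !inE leqnn => /(_ isT).
rewrite !bigcup_tab_of_rows //; apply/subsetP => x; rewrite !inE.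
exact/leq_trans/le_rs.
Qed.

Lemma card_row r (i : nat) : size r = 6 -> #|[set x : 'I_6 | nth 0 r x == i]| = count_mem i r.
Proof.
move=> sz_r; rewrite cardsE cardE /enum_mem size_filter -enumT.
transitivity (count (fun k => nth 0 r k == i) (iota 0 6)); first by rewrite -val_enum_ord count_map.
by rewrite -[in RHS](mkseq_nth 0 r) sz_r /mkseq count_map.
Qed.

Lemma is_tabloid_rows lam r : row_word r ->
  is_tabloid lam (tab_of_rows r) = all (fun i => count_mem i r == nth 0 lam i) (iota 0 6).
Proof.
move=> wr; have [/eqP sz_r _] := andP wr; rewrite /is_tabloid.
have -> : [forall i : 'I_6, forall j : 'I_6,
            (i != j) ==> [disjoint tab_of_rows r i & tab_of_rows r j]].
  apply/forallP => i; apply/forallP => j; apply/implyP => neq_ij; rewrite !ffunE.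
  rewrite disjoint_subset; apply/subsetP => x; rewrite !inE => /eqP ri.
  by apply: contra neq_ij => /eqP rj; apply/eqP/ord_inj; rewrite -ri -rj.
rewrite andbT -forall_ord_iota; apply: eq_forallb => i.
by rewrite ffunE card_row.
Qed.

Lemma mem_imset_perm (T : finType) (z : {perm T}) (A : {set T}) y :
  (y \in z @: A) = ((z^-1)%g y \in A).
Proof. by rewrite -{1}(permKV z y) mem_imset //; apply: perm_inj. Qed.

Lemma tact1 A : tact 1 A = A.
Proof. by apply/ffunP => i; apply/setP => x; rewrite ffunE mem_imset_perm invg1 perm1. Qed.

Lemma tactM z w A : tact (z * w) A = tact w (tact z A).
Proof. by apply/ffunP => i; apply/setP => x; rewrite !ffunE !mem_imset_perm invMg permM. Qed.

Lemma index_perm_seq n (z : {perm 'I_n}) (y : 'I_n) : index (y : nat) (perm_seq z) = (z^-1)%g y.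
Proof.
rewrite -{1}(permKV z y) -nth_perm_seq index_uniq ?size_perm_seq //.
by rewrite (perm_uniq (perm_seq_iota z)) iota_uniq.
Qed.

Lemma tact_rows z r : tact z (tab_of_rows r) = tab_of_rows (act_word (perm_seq z) r).
Proof.
apply/ffunP => i; rewrite !ffunE; apply/setP => y.
rewrite mem_imset_perm !inE /act_word (nth_map 0) ?size_iota //.
by rewrite nth_iota // add0n index_perm_seq.
Qed.

Lemma orbG_eq (G : {group {perm 'I_6}}) A B : B \in orbG G A -> orbG G B = orbG G A.
Proof.
case/imsetP => z Gz ->; apply/setP => C; apply/imsetP/imsetP => [[w Gw ->] | [w Gw ->]].
  by exists (z * w)%g; rewrite ?groupM // tactM.
by exists (z^-1 * w)%g; rewrite ?groupM ?groupV // -tactM mulKVg.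
Qed.

Lemma orbG_refl (G : {group {perm 'I_6}}) A : A \in orbG G A.
Proof. by apply/imsetP; exists 1%g; rewrite ?group1 ?tact1. Qed.

(* Row word of a tabloid, with 6 standing for "in no row". *)
Definition rows_of (A : tab) : seq nat :=
  [seq if [pick i | (inord x : 'I_6) \in A i] is Some i then val i else 6 | x <- iota 0 6].

Lemma size_rows_of A : size (rows_of A) = 6.
Proof. by rewrite size_map size_iota. Qed.

Lemma rows_of_lt A : all (gtn 7) (rows_of A).
Proof. by apply/allP => _ /mapP[x _ ->]; case: pickP => // i _; exact: leq_trans (ltn_ord i) _. Qed.

Lemma tabloid_sub_rows_of lam A :
  is_tabloid lam A -> forall i, A i \subset tab_of_rows (rows_of A) i.
Proof.
case/andP=> _ /forallP disjA i; apply/subsetP => x Ax.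
rewrite ffunE inE (nth_map 0) ?size_iota // nth_iota // add0n inord_val.
case: pickP => [j Ajx | /(_ i)]; last by rewrite Ax.
case: (eqVneq i j) => [-> // | neq_ij].
by have /forallP/(_ j) := disjA i; rewrite neq_ij => /disjointFr/(_ Ax); rewrite Ajx.
Qed.

Definition Gd_seq : seq (seq nat) :=
  [:: [:: 0; 1; 2; 3; 4; 5]; [:: 2; 3; 4; 5; 0; 1]; [:: 4; 5; 0; 1; 2; 3];
      [:: 3; 2; 1; 0; 5; 4]; [:: 1; 0; 5; 4; 3; 2]; [:: 5; 4; 3; 2; 1; 0]].

Definition Gd'_seq : seq (seq nat) := Gd_seq ++
  [:: [:: 1; 0; 3; 2; 5; 4]; [:: 3; 2; 5; 4; 1; 0]; [:: 5; 4; 1; 0; 3; 2];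
      [:: 2; 3; 0; 1; 4; 5]; [:: 0; 1; 4; 5; 2; 3]; [:: 4; 5; 2; 3; 0; 1]].

Lemma pt_val k : k < 6 -> pt k.+1 = k :> nat.
Proof. exact: inordK. Qed.

Lemma perm_seq_g1 : perm_seq g1 = [:: 2; 3; 4; 5; 0; 1].
Proof. by rewrite /g1 !perm_seqM !(@perm_seq_tperm 6) !pt_val. Qed.

Lemma perm_seq_g2 : perm_seq g2 = [:: 3; 2; 1; 0; 5; 4].
Proof. by rewrite /g2 !perm_seqM !(@perm_seq_tperm 6) !pt_val. Qed.

Lemma perm_seq_g3 : perm_seq g3 = [:: 1; 0; 3; 2; 5; 4].
Proof. by rewrite /g3 !perm_seqM !(@perm_seq_tperm 6) !pt_val. Qed.

Lemma perm_seq_gen n (gens : {set {perm 'I_n}}) (L : seq (seq nat)) :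
    iota 0 n \in L -> allrel (fun s t => comp_seq s t \in L) L L ->
    {in gens, forall z, perm_seq z \in L} ->
  forall z, z \in <<gens>>%g -> perm_seq z \in L.
Proof.
move=> L1 /allrelP L_closed L_gens y.
have L_group : group_set [set z : {perm 'I_n} | perm_seq z \in L].
  apply/group_setP; split => [|s t]; first by rewrite inE perm_seq1.
  by rewrite !inE perm_seqM; apply: L_closed.
have : (<<gens>> \subset Group L_group)%g.
  by rewrite gen_subG; apply/subsetP => z /L_gens; rewrite inE.
by move/subsetP => /(_ y) sub /sub; rewrite inE.
Qed.

Lemma Gd_perm_seq z : z \in Gd -> perm_seq z \in Gd_seq.
Proof.
apply: perm_seq_gen => [||y]; [by [] | by vm_compute |].
by rewrite !inE => /orP[] /eqP ->; rewrite ?perm_seq_g1 ?perm_seq_g2.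
Qed.

Lemma Gd'_perm_seq z : z \in Gd' -> perm_seq z \in Gd'_seq.
Proof.
apply: perm_seq_gen => [||y]; [by [] | by vm_compute |].
by rewrite !inE => /orP[/orP[]|] /eqP ->; rewrite ?perm_seq_g1 ?perm_seq_g2 ?perm_seq_g3.
Qed.

Lemma Gd_seq_perm_seq t : t \in Gd_seq -> exists2 z, z \in Gd & perm_seq z = t.
Proof.
have G1 : g1 \in Gd by rewrite mem_gen // !inE eqxx.
have G2 : g2 \in Gd by rewrite mem_gen // !inE eqxx orbT.
pose words := [:: 1; g1; g1 * g1; g2; g1 * g2; g1 * g1 * g2]%g.
have -> : Gd_seq = map (@perm_seq 6) words.
  transitivity [:: perm_seq (1 : {perm 'I_6}); perm_seq g1; perm_seq (g1 * g1);
                   perm_seq g2; perm_seq (g1 * g2); perm_seq (g1 * g1 * g2)]%g => //.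
  by rewrite !(perm_seqM (g1 * g1)) !(perm_seqM g1) perm_seq1 perm_seq_g1 perm_seq_g2.
case/mapP=> z z_words ->; exists z => //.
move: z_words; rewrite !inE => /orP[|/orP[|/orP[|/orP[|/orP[]]]]] /eqP ->.
- exact: group1.
- by [].
- exact: (groupM G1 G1).
- by [].
- exact: (groupM G1 G2).
- exact: (groupM (groupM G1 G1) G2).
Qed.

Lemma g3_in_Gd' : g3 \in Gd'.
Proof. by rewrite mem_gen // !inE eqxx !orbT. Qed.

Definition reps : seq (seq nat) :=
  [:: [:: 0; 0; 0; 0; 0; 0]; [:: 0; 0; 0; 0; 0; 1]; [:: 0; 0; 0; 0; 1; 1]; [:: 0; 0; 0; 1; 0; 1];
      [:: 0; 0; 0; 1; 1; 0]; [:: 0; 0; 1; 0; 0; 1]; [:: 0; 0; 0; 0; 1; 2]; [:: 0; 0; 0; 1; 0; 2];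
      [:: 0; 0; 0; 2; 0; 1]; [:: 0; 0; 0; 1; 2; 0]; [:: 0; 0; 1; 0; 0; 2]; [:: 0; 0; 0; 1; 1; 1];
      [:: 0; 0; 1; 0; 1; 1]; [:: 0; 1; 0; 1; 0; 1]; [:: 0; 1; 0; 1; 1; 0]].

Definition rep (k : nat) : seq nat := nth [::] reps k.

Definition orb_shape (k : nat) : seq nat :=
  if k < 2 then nth [::] [:: [:: 6]; [:: 5; 1]] k
  else if k < 6 then [:: 4; 2] else if k < 11 then [:: 4; 1; 1] else [:: 3; 3].

Definition orbit_words (r : seq nat) : seq (seq nat) := [seq act_word t r | t <- Gd_seq].

Definition orb (k : nat) : {set tab} := orbG Gd (tab_of_rows (rep k)).

Lemma orbG_rowsP r A :
  A \in orbG Gd (tab_of_rows r) <-> exists2 s, s \in orbit_words r & A = tab_of_rows s.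
Proof.
split => [/imsetP[z Gz ->] | [_ /mapP[t Gt ->] ->]].
  exists (act_word (perm_seq z) r); last by rewrite tact_rows.
  by apply/mapP; exists (perm_seq z); rewrite ?Gd_perm_seq.
by have [z Gz <-] := Gd_seq_perm_seq Gt; apply/imsetP; exists z; rewrite ?tact_rows.
Qed.

Lemma rep_spec k : k < 15 ->
  [/\ row_word (rep k), all (fun i => count_mem i (rep k) == nth 0 (orb_shape k) i) (iota 0 6),
      orb_shape k \in D6 & all row_word (orbit_words (rep k))].
Proof.
have : all (fun k => [&& row_word (rep k),
                         all (fun i => count_mem i (rep k) == nth 0 (orb_shape k) i) (iota 0 6),
                         orb_shape k \in D6 & all row_word (orbit_words (rep k))]) (iota 0 15).
  by vm_compute.
by move=> /allP spec lt_k; apply/and4P/spec; rewrite mem_iota.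
Qed.

Lemma orb_inj a b : a < 15 -> b < 15 -> orb a = orb b -> a = b.
Proof.
move=> lt_a lt_b E; have [wa _ _ _] := rep_spec lt_a; have [_ _ _ /allP wb] := rep_spec lt_b.
have /orbG_rowsP[s s_orb eq_tab] : tab_of_rows (rep a) \in orb b by rewrite -E orbG_refl.
have eq_s : rep a = s by apply: (tab_of_rows_inj wa (wb _ s_orb) eq_tab).
have distinct_reps : all (fun a => all (fun b => (rep a \in orbit_words (rep b)) ==> (a == b))
                                       (iota 0 15)) (iota 0 15) by vm_compute.
move/allP: distinct_reps => /(_ a); rewrite mem_iota => /(_ lt_a) /allP /(_ b).
by rewrite mem_iota eq_s s_orb => /(_ lt_b) /eqP.
Qed.

(* The row word [rows_of A] of a tabloid of shape [lam] has at least [lam_i]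
   entries [i] for every [i < 6]; this already forces it to be a genuine row word of
   content [lam], lying in the orbit of a representative of shape [lam]. *)
Lemma D6_row_words :
  all (fun lam => all_words 7 6 (fun r =>
    if all (fun i => nth 0 lam i <= count_mem i r) (iota 0 6) then
      [&& row_word r, all (fun i => count_mem i r == nth 0 lam i) (iota 0 6) &
          has (fun k => (orb_shape k == lam) && (r \in orbit_words (rep k))) (iota 0 15)]
    else true)) D6.
Proof. by vm_compute. Qed.

Lemma tabloid_orb lam A : lam \in D6 -> is_tabloid lam A ->
  exists k, [/\ k < 15, orb_shape k = lam & A \in orb k].
Proof.
move=> D6lam tabA; set r := rows_of A.
have sub_r := tabloid_sub_rows_of tabA.
have le_count : all (fun i => nth 0 lam i <= count_mem i r) (iota 0 6).
  apply/allP => i; rewrite mem_iota add0n => /andP[_ lt_i6].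
  have [/forallP card_A _] := andP tabA.
  rewrite -(eqP (card_A (Ordinal lt_i6))) -card_row ?size_rows_of //.
  by have := subset_leq_card (sub_r (Ordinal lt_i6)); rewrite ffunE.
move/allP: D6_row_words => /(_ lam D6lam) /all_wordsP /(_ r (size_rows_of A) (rows_of_lt A)).
rewrite le_count => /and3P[wr /allP count_r /hasP[k]].
rewrite mem_iota => lt_k /andP[/eqP sh_k r_orb].
exists k; split => //; apply/orbG_rowsP; exists r => //.
apply/ffunP => i; apply/eqP; rewrite eqEcard sub_r /= ffunE card_row ?(eqP (size_rows_of A)) //.
have [/forallP card_A _] := andP tabA; rewrite (eqP (card_A i)).
by rewrite (eqP (count_r i _)) // mem_iota /=.
Qed.

Lemma mem_T_lamG lam x : lam \in D6 ->
  x \in T_lamG lam Gd <-> exists k, [/\ k < 15, orb_shape k = lam & x = orb k].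
Proof.
move=> D6lam; split => [/imsetP[A] | [k [lt_k sh_k ->]]].
  rewrite inE => /(tabloid_orb D6lam)[k [lt_k sh_k A_k]] ->.
  by exists k; rewrite (orbG_eq A_k).
apply/imsetP; exists (tab_of_rows (rep k)) => //.
by have [wk count_k _ _] := rep_spec lt_k; rewrite inE is_tabloid_rows // -sh_k.
Qed.

Lemma bigcup_seqP (T : finType) (I : eqType) (s : seq I) (F : I -> {set T}) x :
  reflect (exists2 i, i \in s & x \in F i) (x \in \bigcup_(i <- s) F i).
Proof.
elim: s => [|i s IH]; first by rewrite big_nil inE; constructor; case.
rewrite big_cons inE; apply: (iffP orP) => [[Fx | /IH[j sj Fx]] | [j]].
- by exists i; rewrite ?mem_head.
- by exists j; rewrite // inE sj orbT.
by rewrite inE => /orP[/eqP-> | sj Fx]; [left | right; apply/IH; exists j].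
Qed.

Lemma T_DG_orb : T_DG D6 Gd = labelled 15 orb.
Proof.
apply/setP => x; apply/bigcup_seqP/labelledP => [[lam D6lam] | [k lt_k ->]].
  by case/mem_T_lamG => // k [lt_k _ ->]; exists k.
have [_ _ D6k _] := rep_spec lt_k.
by exists (orb_shape k) => //; apply/mem_T_lamG => //; exists k.
Qed.

(* Tabulated, so that [vm_compute] evaluates each comparison only once. *)
Definition rep_le_table : seq (seq bool) :=
  [seq [seq has (fun r => has (le_word r) (orbit_words (rep b))) (orbit_words (rep a))
       | b <- iota 0 15] | a <- iota 0 15].

Definition rep_le (a b : nat) : bool := nth false (nth [::] rep_le_table a) b.

Lemma orb_le_rep a b : a < 15 -> b < 15 -> orb_le (orb a) (orb b) = rep_le a b.
Proof.
move=> lt_a lt_b; have [_ _ _ /allP wa] := rep_spec lt_a; have [_ _ _ /allP wb] := rep_spec lt_b.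
rewrite /rep_le (nth_map 0) ?size_iota // nth_iota // (nth_map 0) ?size_iota // nth_iota // !add0n.
apply/existsP/hasP => [[A /andP[/orbG_rowsP[r ra ->] /existsP[B /andP[/orbG_rowsP[s sb ->]]]]] | ].
  by rewrite tab_le_rows ?(wa r) ?(wb s) // => le_rs; exists r => //; apply/hasP; exists s.
case=> r ra /hasP[s sb le_rs]; exists (tab_of_rows r); apply/andP; split.
  by apply/orbG_rowsP; exists r.
apply/existsP; exists (tab_of_rows s); rewrite tab_le_rows ?(wa r) ?(wb s) // le_rs andbT.
by apply/orbG_rowsP; exists s.
Qed.

Definition poset_auto (p : seq nat) : bool :=
  [&& perm_eq p (iota 0 15),
      all (fun k => orb_shape (nth 0 p k) == orb_shape k) (iota 0 15) &
      allrel (fun a b => rep_le (nth 0 p a) (nth 0 p b) == rep_le a b) (iota 0 15) (iota 0 15)].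

Lemma poset_auto_spec p : poset_auto p ->
  [/\ perm_eq p (iota 0 15), forall k, k < 15 -> orb_shape (nth 0 p k) = orb_shape k &
      forall a b, a < 15 -> b < 15 -> rep_le (nth 0 p a) (nth 0 p b) = rep_le a b].
Proof.
case/and3P=> pp /allP sh /allrelP le; split => // [k lt_k | a b lt_a lt_b].
  by apply/eqP/sh; rewrite mem_iota.
by apply/eqP/le; rewrite mem_iota.
Qed.

Definition perms (n : nat) : seq (seq nat) := permutations (iota 0 n).

Lemma perm_seq_perms n (s : {perm 'I_n}) : perm_seq s \in perms n.
Proof. by rewrite mem_permutations perm_seq_iota. Qed.

Lemma perms_perm_seq n l : l \in perms n -> exists s : {perm 'I_n}, perm_seq s = l.
Proof. by rewrite mem_permutations; apply: perm_seq_surj. Qed.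

Definition block_perm (blk s : seq nat) (k : nat) : nat := nth 0 blk (nth 0 s (index k blk)).

(* [s] permutes the (4,2)-orbits 2, 4, 5 and, alike, the (4,1^2)-orbits 6, 9, 10
   lying below them and the (3^2)-orbits 14, 12, 11 lying below the other two of
   them; [t] permutes the (4,1^2)-orbits 7, 8 lying below the remaining (4,2)-orbit 3. *)
Definition auto_list (s t : seq nat) : seq nat :=
  [seq if k \in [:: 2; 4; 5] then block_perm [:: 2; 4; 5] s k
       else if k \in [:: 6; 9; 10] then block_perm [:: 6; 9; 10] s k
       else if k \in [:: 14; 12; 11] then block_perm [:: 14; 12; 11] s k
       else if k \in [:: 7; 8] then block_perm [:: 7; 8] t k else k
  | k <- iota 0 15].

Lemma auto_list_poset_auto :
  all (fun s => all (fun t => poset_auto (auto_list s t)) (perms 2)) (perms 3).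
Proof. by vm_compute. Qed.

Definition same_shape (k : nat) : seq nat := [seq v <- iota 0 15 | orb_shape v == orb_shape k].

Definition rep_le_compat (i a j b : nat) : bool :=
  (rep_le a b == rep_le i j) && (rep_le b a == rep_le j i).

Lemma admissible_auto_list :
  all (fun p => has (fun s => has (fun t => p == auto_list s t) (perms 2)) (perms 3))
      (admissible_seqs same_shape rep_le_compat 15).
Proof. by vm_compute. Qed.

Lemma poset_auto_admissible p : poset_auto p -> p \in admissible_seqs same_shape rep_le_compat 15.
Proof.
case/poset_auto_spec=> pp sh le; rewrite -(size_iota_perm pp); apply: mem_admissible_seqs.
- move=> k; rewrite (size_iota_perm pp) => lt_k.
  by rewrite mem_filter sh // eqxx mem_iota nth_iota_perm_lt.
- by rewrite (perm_uniq pp) iota_uniq.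
move=> i j /andP[lt_ij]; rewrite (size_iota_perm pp) => lt_j.
by rewrite /rep_le_compat !le ?(ltn_trans lt_ij) // !eqxx.
Qed.

Lemma poset_autoP p : poset_auto p <->
  exists s, exists2 t, (s \in perms 3) && (t \in perms 2) & p = auto_list s t.
Proof.
split => [/poset_auto_admissible ad | [s [t /andP[s3 t2] ->]]].
  move/allP: admissible_auto_list => /(_ p ad) /hasP[s s3 /hasP[t t2 /eqP ->]].
  by exists s, t; rewrite ?s3.
by move/allP: auto_list_poset_auto => /(_ s s3) /allP; apply.
Qed.

Notation relabel_orb := (relabel orb_inj).

Lemma Aut0_relabel p : poset_auto p -> relabel_orb p \in Aut0 D6 Gd.
Proof.
case/poset_auto_spec=> pp sh le; rewrite inE T_DG_orb relabel_on // andTb.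
have lt_p k : k < 15 -> nth 0 p k < 15 by apply: nth_iota_perm_lt.
apply/andP; split.
  apply/forall_inP => x /labelledP[a lt_a ->].
  apply/forall_inP => y /labelledP[b lt_b ->].
  by rewrite !relabel_o // !orb_le_rep ?lt_p // le.
apply/allP => mu D6mu; rewrite eqEcard card_imset ?leqnn ?andbT; last exact: perm_inj.
apply/subsetP => _ /imsetP[_ /(mem_T_lamG _ D6mu)[k [lt_k sh_k ->]] ->].
by apply/mem_T_lamG => //; exists (nth 0 p k); rewrite relabel_o // sh ?lt_p.
Qed.

Lemma Aut0_poset_auto al : al \in Aut0 D6 Gd -> poset_auto (labels_of 15 orb al).
Proof.
rewrite inE T_DG_orb => /and3P[al_on /forallP al_le /allP al_sh].
set p := labels_of 15 orb al.
have alE k : k < 15 -> nth 0 p k < 15 /\ al (orb k) = orb (nth 0 p k).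
  move=> lt_k; rewrite (nth_map 0) ?size_iota // nth_iota // add0n.
  exact: (labels_ofE orb_inj al_on lt_k).
apply/and3P; split; first exact: (labels_of_iota orb_inj al_on).
  apply/allP => k; rewrite mem_iota /= => lt_k; have [lt_pk al_k] := alE k lt_k.
  have [_ _ D6k _] := rep_spec lt_k; have /eqP al_shk := al_sh _ D6k.
  have : al (orb k) \in T_lamG (orb_shape k) Gd.
    by rewrite -al_shk imset_f //; apply/mem_T_lamG => //; exists k.
  by case/(mem_T_lamG _ D6k) => j [lt_j <-]; rewrite al_k => /orb_inj ->.
apply/allrelP => a b; rewrite !mem_iota /= => lt_a lt_b.
have [lt_pa al_a] := alE a lt_a; have [lt_pb al_b] := alE b lt_b.
have := al_le (orb a); rewrite labelled_o //= => /forall_inP /(_ (orb b) (labelled_o _ lt_b)).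
by rewrite al_a al_b !orb_le_rep.
Qed.

Lemma mem_Aut0 al : al \in Aut0 D6 Gd <-> exists2 p, poset_auto p & al = relabel_orb p.
Proof.
split => [Aut_al | [p p_auto ->]]; last exact: Aut0_relabel.
have al_on : perm_on (labelled 15 orb) al by move: Aut_al; rewrite inE T_DG_orb => /and3P[].
by exists (labels_of 15 orb al); rewrite ?Aut0_poset_auto ?(labels_ofK orb_inj al_on).
Qed.

Lemma auto_listM s1 s2 t1 t2 :
    s1 \in perms 3 -> s2 \in perms 3 -> t1 \in perms 2 -> t2 \in perms 2 ->
  auto_list (comp_seq s1 s2) (comp_seq t1 t2) = comp_seq (auto_list s1 t1) (auto_list s2 t2).
Proof.
move=> s1_3 s2_3 t1_2 t2_2; apply/eqP.
have : all (fun s1 => all (fun s2 => all (fun t1 => all (fun t2 =>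
         auto_list (comp_seq s1 s2) (comp_seq t1 t2) ==
         comp_seq (auto_list s1 t1) (auto_list s2 t2))
       (perms 2)) (perms 2)) (perms 3)) (perms 3) by vm_compute.
by move/allP/(_ _ s1_3)/allP/(_ _ s2_3)/allP/(_ _ t1_2)/allP/(_ _ t2_2).
Qed.

Lemma auto_list_inj s1 s2 t1 t2 :
    s1 \in perms 3 -> s2 \in perms 3 -> t1 \in perms 2 -> t2 \in perms 2 ->
  auto_list s1 t1 = auto_list s2 t2 -> s1 = s2 /\ t1 = t2.
Proof.
move=> s1_3 s2_3 t1_2 t2_2 /eqP eq_auto.
have : all (fun s1 => all (fun s2 => all (fun t1 => all (fun t2 =>
         (auto_list s1 t1 == auto_list s2 t2) ==> (s1 == s2) && (t1 == t2))
       (perms 2)) (perms 2)) (perms 3)) (perms 3) by vm_compute.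
move/allP/(_ _ s1_3)/allP/(_ _ s2_3)/allP/(_ _ t1_2)/allP/(_ _ t2_2).
by rewrite eq_auto => /andP[/eqP -> /eqP ->].
Qed.

Definition aut_of (x : {perm 'I_3} * {perm 'I_2}) : {perm {set tab}} :=
  relabel_orb (auto_list (perm_seq x.1) (perm_seq x.2)).

Lemma auto_list_perm_seq (s : {perm 'I_3}) (t : {perm 'I_2}) :
  poset_auto (auto_list (perm_seq s) (perm_seq t)).
Proof. by apply/poset_autoP; exists (perm_seq s), (perm_seq t); rewrite ?perm_seq_perms. Qed.

Lemma aut_ofM : {morph aut_of : x y / (x * y)%g}.
Proof.
move=> [s1 t1] [s2 t2]; rewrite /aut_of /= !perm_seqM auto_listM ?perm_seq_perms //.
have [/and3P[p1 _ _] /and3P[p2 _ _]] := (auto_list_perm_seq s1 t1, auto_list_perm_seq s2 t2).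
by rewrite relabelM.
Qed.

Canonical aut_of_morphism := @Morphism _ _ setT aut_of (in2W aut_ofM).

Lemma injm_aut_of : ('injm aut_of_morphism)%g.
Proof.
apply/injmP => [[s1 t1] [s2 t2]] _ _; rewrite /= /aut_of /=.
have [/and3P[p1 _ _] /and3P[p2 _ _]] := (auto_list_perm_seq s1 t1, auto_list_perm_seq s2 t2).
move/(relabel_inj p1 p2)/auto_list_inj; rewrite !perm_seq_perms.
by case=> // /perm_seq_inj -> /perm_seq_inj ->.
Qed.

Lemma im_aut_of : (aut_of_morphism @* setT)%g = Aut0 D6 Gd.
Proof.
rewrite morphimEdom; apply/setP => al; apply/imsetP/idP => [[x _ ->] | /mem_Aut0[p]].
  by apply/mem_Aut0; exists (auto_list (perm_seq x.1) (perm_seq x.2)); rewrite ?auto_list_perm_seq.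
case/poset_autoP => sl [tl /andP[/perms_perm_seq[s <-] /perms_perm_seq[t <-]] ->] ->.
by exists (s, t); rewrite ?inE.
Qed.

(* The permutation of the 15 orbits induced by (12)(34)(56), an element of G' \ G. *)
Definition g3_orbs : seq nat := [:: 0; 1; 2; 3; 5; 4; 6; 8; 7; 10; 9; 12; 11; 13; 14].

Definition orb_act (t : seq nat) (k : nat) : nat := if t \in Gd_seq then k else nth 0 g3_orbs k.

Lemma orbG_tact eta k A : eta \in Gd' -> k < 15 -> A \in orb k ->
  orbG Gd (tact eta A) = orb (orb_act (perm_seq eta) k).
Proof.
move=> G'eta lt_k /orbG_rowsP[r r_orb ->]; rewrite tact_rows; apply: orbG_eq; apply/orbG_rowsP.
have : all (fun t => all (fun k => all (fun r => act_word t r \in orbit_words (rep (orb_act t k)))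
               (orbit_words (rep k))) (iota 0 15)) Gd'_seq by vm_compute.
move/allP/(_ _ (Gd'_perm_seq G'eta))/allP/(_ k); rewrite mem_iota => /(_ lt_k)/allP/(_ r r_orb).
by exists (act_word (perm_seq eta) r).
Qed.

Lemma orb_act_lt t k : k < 15 -> orb_act t k < 15.
Proof.
rewrite /orb_act; case: ifP => // _ lt_k.
by apply: (@nth_iota_perm_lt 15); first by vm_compute.
Qed.

Definition commutes_g3 (p : seq nat) : bool :=
  all (fun k => nth 0 p (nth 0 g3_orbs k) == nth 0 g3_orbs (nth 0 p k)) (iota 0 15).

Lemma orb_act_g3 k : orb_act (perm_seq g3) k = nth 0 g3_orbs k.
Proof. by rewrite /orb_act perm_seq_g3. Qed.

Lemma relabel_orbG_tact p eta k A : perm_eq p (iota 0 15) -> eta \in Gd' -> k < 15 -> A \in orb k ->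
  relabel_orb p (orbG Gd (tact eta A)) = orb (nth 0 p (orb_act (perm_seq eta) k)).
Proof. by move=> pp G'eta lt_k A_k; rewrite (orbG_tact G'eta lt_k A_k) relabel_o ?orb_act_lt. Qed.

Lemma mem_Aut0G al :
  al \in Aut0G D6 Gd Gd' <-> exists2 p, poset_auto p && commutes_g3 p & al = relabel_orb p.
Proof.
rewrite inE; split => [/andP[/mem_Aut0[p p_auto ->] /forallP equiv] | [p /andP[p_auto comm] ->]].
  have [pp _ _] := poset_auto_spec p_auto; have p_lt := nth_iota_perm_lt pp.
  have g3_lt j : j < 15 -> nth 0 g3_orbs j < 15 by rewrite -orb_act_g3; apply: orb_act_lt.
  exists p => //; rewrite p_auto; apply/allP => k; rewrite mem_iota add0n /= => lt_k.
  have := equiv g3; rewrite g3_in_Gd' T_DG_orb => /forall_inP /(_ _ (labelled_o _ lt_k)).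
  move=> /forall_inP /(_ _ (orbG_refl _ _)) /forall_inP /(_ (tab_of_rows (rep (nth 0 p k)))).
  rewrite relabel_o // orbG_refl => /(_ isT) /eqP.
  rewrite (relabel_orbG_tact pp g3_in_Gd' lt_k (orbG_refl _ _)).
  rewrite (orbG_tact g3_in_Gd' (p_lt _ lt_k) (orbG_refl _ _)) !orb_act_g3 => /orb_inj eq_k.
  by apply/eqP/eq_k; [apply/p_lt/g3_lt | apply/g3_lt/p_lt].
have [pp _ _] := poset_auto_spec p_auto; have p_lt := nth_iota_perm_lt pp.
apply/andP; split; first exact: Aut0_relabel.
rewrite T_DG_orb; apply/forall_inP => eta G'eta; apply/forall_inP => _ /labelledP[k lt_k ->].
apply/forall_inP => A A_k; apply/forall_inP => B; rewrite relabel_o // => B_pk.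
rewrite (relabel_orbG_tact pp G'eta lt_k A_k) (orbG_tact G'eta (p_lt _ lt_k) B_pk) /orb_act.
by case: ifP => // _; move/allP: comm => /(_ k); rewrite mem_iota => /(_ lt_k) /eqP ->.
Qed.


Lemma commutes_g3_auto_list s t : s \in perms 3 -> t \in perms 2 ->
  commutes_g3 (auto_list s t) = (nth 0 s 0 == 0).
Proof.
move=> s3 t2; apply/eqP.
have : all (fun s => all (fun t => commutes_g3 (auto_list s t) == (nth 0 s 0 == 0)) (perms 2))
           (perms 3).
  by vm_compute.
by move/allP/(_ _ s3)/allP/(_ _ t2).
Qed.

Definition aut'_of (x : {perm 'I_2} * {perm 'I_2}) : {perm {set tab}} :=
  aut_of (lift_perm ord0 ord0 x.1, x.2).

Lemma aut'_ofM : {morph aut'_of : x y / (x * y)%g}.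
Proof. by move=> [u1 t1] [u2 t2]; rewrite /aut'_of /= -(lift_permM ord0 ord0 ord0) -aut_ofM. Qed.

Canonical aut'_of_morphism := @Morphism _ _ setT aut'_of (in2W aut'_ofM).

Lemma injm_aut'_of : ('injm aut'_of_morphism)%g.
Proof.
apply/injmP => [[u1 t1] [u2 t2]] _ _; rewrite /= /aut'_of.
move/(injmP injm_aut_of); rewrite !inE => /(_ isT isT) [E ->]; congr (_, _).
by apply/permP => k; apply: (@lift_inj _ ord0); rewrite -!(lift_perm_lift ord0) E.
Qed.

Lemma im_aut'_of : (aut'_of_morphism @* setT)%g = Aut0G D6 Gd Gd'.
Proof.
rewrite morphimEdom; apply/setP => al; apply/imsetP/idP => [[[u t] _ ->] | /mem_Aut0G[p]].
  apply/mem_Aut0G; exists (auto_list (perm_seq (lift_perm ord0 ord0 u)) (perm_seq t)) => //.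
  by rewrite auto_list_perm_seq commutes_g3_auto_list ?perm_seq_perms // perm_seq0 lift_perm_id.
case/andP=> /poset_autoP[sl [tl /andP[s3 t2] ->]].
case/perms_perm_seq: s3 => s <-; case/perms_perm_seq: t2 => t <-.
rewrite commutes_g3_auto_list ?perm_seq_perms // perm_seq0.
move=> /eqP /(@ord_inj _ _ ord0) /lift_perm_stab[u ->] ->.
by exists (u, t); rewrite ?inE.
Qed.

Theorem theorem10p3p5 :
  isog (Aut0 D6 Gd) [set: {perm 'I_3} * {perm 'I_2}] /\
  isog (Aut0G D6 Gd Gd') [set: {perm 'I_2} * {perm 'I_2}].
Proof.
split.
- by rewrite -im_aut_of isog_sym; apply: sub_isog (subxx _) injm_aut_of.
- by rewrite -im_aut'_of isog_sym; apply: sub_isog (subxx _) injm_aut'_of.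
Qed.
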